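(* Let $\mathbf{X},\mathbf{Y}$ be sgrms over $\mathbb{R}^d$ on $[0,T]$. A map $\mathbf{Z}:[0,T]^2\to G(\mathbb{R}^d)$ coincides with $\mathbf{X}\boxplus\mathbf{Y}$ if and only if $\mathbf{Z}_{s,t}=\mathbf{Z}_{s,u}\otimes\mathbf{Z}_{u,t}$ for all $s,u,t\in[0,T]$ and, for every $s\in[0,T]$, $$\mathbf{Z}_{s,t}=\mathbf{X}_{s,t}\otimes\mathbf{Y}_{s,t}+R_{s,t}$$ for some $R_{s,t}\in T((\mathbb{R}^d))$ with $\langle R_{s,t},x\rangle=o(|t-s|)$ as $t\to s$ for all $x\in T(\mathbb{R}^d)$. Moreover, $$\mathbf{X}_{s,t}\otimes\mathbf{Y}_{s,t}=\mathbf{Y}_{s,t}\otimes\mathbf{X}_{s,t}+r_{s,t}=\mathbf{X}_{s,t}+\mathbf{Y}_{s,t}-\mathbf{1}+r'_{s,t}$$ for some $r_{s,t},r'_{s,t}\in T((\mathbb{R}^d))$ with $\langle r_{s,t},x\rangle,\langle r'_{s,t},x\rangle=o(|t-s|)$ as $t\to s$ for all $x\in T(\mathbb{R}^d)$.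
   Context: Fix $T>0$, $d\ge1$. $T((\mathbb{R}^d))$: formal tensor series $\sum_w\mathbf{x}^we_w$ over words in $\{1,\dots,d\}$ (incl. empty word, whose basis element $\mathbf{1}$ is the unit) with concatenation product $\otimes$; $T(\mathbb{R}^d)$ the polynomials; $\langle\mathbf{x},w\rangle=\mathbf{x}^w$, extended linearly. Shuffle product: bilinear, unit $\mathbf{1}$, $wi\sqcup\!\sqcup vj=(w\sqcup\!\sqcup vj)i+(wi\sqcup\!\sqcup v)j$. $G(\mathbb{R}^d)=\{\mathbf{x}:\langle\mathbf{x},\mathbf{1}\rangle=1,\ \langle\mathbf{x},v\sqcup\!\sqcup w\rangle=\langle\mathbf{x},v\rangle\langle\mathbf{x},w\rangle\ \forall v,w\}$, a group under $\otimes$; $\mathcal{L}((\mathbb{R}^d))$ the Lie series. An sgrm is a non-zero map $\mathbf{X}:[0,T]^2\to T((\mathbb{R}^d))$ with $\langle\mathbf{X}_{s,t},v\sqcup\!\sqcup w\rangle=\langle\mathbf{X}_{s,t},v\rangle\langle\mathbf{X}_{s,t},w\rangle$ for all words, $\mathbf{X}_{s,u}\otimes\mathbf{X}_{u,t}=\mathbf{X}_{s,t}$, and $t\mapsto\langle\mathbf{X}_{s,t},w\rangle$ smooth for all words $w$ and all $s$. Diagonal derivative $\dot{\mathbf{X}}_{s,s}=\partial_t|_{t=s}\mathbf{X}_{s,t}$ (a smooth $\mathcal{L}((\mathbb{R}^d))$-valued path). The canonical sum $\mathbf{X}\boxplus\mathbf{Y}$ of sgrms $\mathbf{X},\mathbf{Y}$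 is the sgrm $(s,t)\mapsto\mathbf{Z}_s^{-1}\otimes\mathbf{Z}_t$, where $\mathbf{Z}$ is the unique solution in $T((\mathbb{R}^d))$ (solved coordinatewise) of $\dot{\mathbf{Z}}_t=\mathbf{Z}_t\otimes(\dot{\mathbf{X}}_{t,t}+\dot{\mathbf{Y}}_{t,t})$, $\mathbf{Z}_0=\mathbf{1}$. *)

From mathcomp Require Import all_boot all_order all_algebra.
From mathcomp Require Import reals.
Set Implicit Arguments. Unset Strict Implicit. Unset Printing Implicit Defensive.
Import Order.TTheory GRing.Theory Num.Theory.
Local Open Scope ring_scope.

Section TensorSeries.
Variables (R : realType) (d : nat).

(* words in the alphabet {1,...,d}, modelled by 'I_d; [::] is the empty word *)
Definition word := seq 'I_d.
(* formal tensor series sum_w x^w e_w, identified with w |-> x^w = <x,w> *)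
Definition series := word -> R.
(* tensor polynomials T(R^d): finite linear combinations of words *)
Definition tpoly := seq (R * word).

Definition tone : series := fun w => (w == [::])%:R.
Definition tadd (x y : series) : series := fun w => x w + y w.
Definition tsub (x y : series) : series := fun w => x w - y w.
(* concatenation product: <x (x) y, w> = sum_{w = uv} <x,u><y,v> *)
Definition tmul (x y : series) : series :=
  fun w => \sum_(k < (size w).+1) x (take k w) * y (drop k w).

(* inverse for series with invertible constant term, computed from x^-1 (x) x = 1;
   fuel-based recursion on the length of the word *)
Fixpoint tinv_rec (n : nat) (x : series) (w : word) : R :=
  match n with
  | 0 => (x [::])^-1
  | n'.+1 => ((w == [::])%:R
              - \sum_(k < size w) tinv_rec n' x (take k w) * x (drop k w)) / x [::]
  end.
Definition tinv (x : series) : series := fun w => tinv_rec (size w) x w.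

Definition tpair (x : series) (p : tpoly) : R := \sum_(cw <- p) cw.1 * x cw.2.

(* shuffle product of words, as a multiset (list) of words.
   shrev works on reversed words (head = last letter) and implements
   wi sh vj = (w sh vj) i + (wi sh v) j,  w sh [::] = w, [::] sh w = w. *)
Fixpoint shrev (a b : word) {struct a} : seq word :=
  match a with
  | [::] => [:: b]
  | i :: a' =>
      (fix sh (b : word) : seq word :=
         match b with
         | [::] => [:: i :: a']
         | j :: b' => map (cons i) (shrev a' (j :: b')) ++ map (cons j) (sh b')
         end) b
  end.
Definition shuffle (v w : word) : seq word := map rev (shrev (rev v) (rev w)).
Definition pair_shuffle (x : series) (v w : word) : R :=
  \sum_(u <- shuffle v w) x u.

Definition grouplike (x : series) : Prop :=
  x [::] = 1 /\ forall v w : word, pair_shuffle x v w = x v * x w.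

End TensorSeries.

Section Calculus.
Variable R : realType.

Definition inI (T t : R) : Prop := 0 <= t <= T.

Definition is_deriv_within (T : R) (f : R -> R) (t l : R) : Prop :=
  forall e : R, 0 < e -> exists2 del : R, 0 < del &
    forall h : R, h != 0 -> `|h| < del -> inI T (t + h) ->
      `|(f (t + h) - f t) / h - l| < e.

Definition smooth_on (T : R) (f : R -> R) : Prop :=
  exists F : nat -> R -> R,
    (forall t, inI T t -> F 0%N t = f t) /\
    forall (n : nat) t, inI T t -> is_deriv_within T (F n) t (F n.+1 t).

Definition littleo_at (T : R) (s : R) (g : R -> R) : Prop :=
  forall e : R, 0 < e -> exists2 del : R, 0 < del &
    forall t : R, inI T t -> 0 < `|t - s| < del -> `|g t| <= e * `|t - s|.

End Calculus.

Section Sgrm.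
Variables (R : realType) (d : nat).
Local Notation series := (series R d).

Definition sgrm (T : R) (X : R -> R -> series) : Prop :=
  (exists s t, [/\ inI T s, inI T t & X s t <> (fun _ => 0)]) /\
  (forall s t, inI T s -> inI T t ->
     forall v w : word d, pair_shuffle (X s t) v w = X s t v * X s t w) /\
  (forall s u t, inI T s -> inI T u -> inI T t -> tmul (X s u) (X u t) = X s t) /\
  (forall s (w : word d), inI T s -> smooth_on T (fun t => X s t w)).

Definition diag_deriv (T : R) (X : R -> R -> series) (DX : R -> series) : Prop :=
  forall s (w : word d), inI T s -> is_deriv_within T (fun t => X s t w) s (DX s w).

Definition boxplus_ode (T : R) (X Y : R -> R -> series) (W : R -> series) : Prop :=
  W 0 = @tone R d /\
  exists DX DY, [/\ diag_deriv T X DX, diag_deriv T Y DY &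
    forall t (w : word d), inI T t ->
      is_deriv_within T (fun u => W u w) t (tmul (W t) (tadd (DX t) (DY t)) w)].

Definition is_boxplus (T : R) (X Y Z : R -> R -> series) : Prop :=
  exists W, boxplus_ode T X Y W /\
    forall s t, inI T s -> inI T t -> Z s t = tmul (tinv (W s)) (W t).

End Sgrm.

(* All statements are read coordinatewise: a path A in T((R^d)) has derivative a
   at s iff every coordinate satisfies <A_t,w> = <A_s,w> + <a,w>(t - s) + o(|t - s|)
   ([taylor1]).  Since X_{s,s} = Y_{s,s} = 1, the Leibniz rule gives X_{s,.} (x) Y_{s,.},
   Y_{s,.} (x) X_{s,.} and X_{s,.} + Y_{s,.} - 1 the same first-order expansion
   1 + (dX_{s,s} + dY_{s,s})(t - s), so their differences are o(|t - s|).
   If Z_{s,t} = W_s^-1 (x) W_t with W solving the ODE, Chen's relation is immediate and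
   Z_{s,.} has the same expansion at s as X_{s,.} (x) Y_{s,.}.  Conversely, Chen's
   relation makes each Z_{s,s} an invertible idempotent, hence 1; then W := Z_{0,.}
   satisfies W_u = W_t (x) Z_{t,u}, the expansion of Z_{t,.} at t yields the ODE, and
   Chen again gives Z_{s,t} = W_s^-1 (x) W_t. *)

From mathcomp Require Import all_boot all_order all_algebra.
From mathcomp Require Import reals boolp ring.
Import Order.TTheory GRing.Theory Num.Theory.
Local Open Scope ring_scope.
Set Implicit Arguments. Unset Strict Implicit.

Section TensorAlgebra.
Variables (R : realType) (d : nat).
Implicit Types (x y z : series R d) (w : word d).

Lemma tsubKC x y : tadd x (tsub y x) = y.
Proof. by apply/funext => w; rewrite /tadd /tsub subrKC. Qed.

Lemma tmul_nil x y : tmul x y [::] = x [::] * y [::].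
Proof. by rewrite /tmul big_ord_recl big_ord0 addr0. Qed.

Lemma tmul_cons x y a w :
  tmul x y (a :: w) = x [::] * y (a :: w) + tmul (fun u => x (a :: u)) y w.
Proof. by rewrite /tmul big_ord_recl. Qed.

Lemma tmul0l y w : tmul (fun _ => 0) y w = 0.
Proof. by rewrite /tmul big1 // => k _; rewrite mul0r. Qed.

Lemma tmul1l x : tmul (@tone R d) x = x.
Proof.
apply/funext => -[|a w]; first by rewrite tmul_nil /tone /= mul1r.
by rewrite tmul_cons /tone /= mul1r -[RHS]addr0 -(tmul0l x w).
Qed.

Lemma tmul1r x : tmul x (@tone R d) = x.
Proof.
apply/funext => w; elim: w x => [|a w IH] x; first by rewrite tmul_nil /tone /= mulr1.
by rewrite tmul_cons IH /tone /= mulr0 add0r.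
Qed.

Lemma tmulA x y z : tmul (tmul x y) z = tmul x (tmul y z).
Proof.
apply/funext => w; elim: w x y => [|a w IH] x y; first by rewrite !tmul_nil mulrA.
have tmul_combl c (u v : series R d) :
    tmul (fun w => c * u w + v w) z w = c * tmul u z w + tmul v z w.
  by rewrite /tmul mulr_sumr -big_split; apply: eq_bigr => k _; rewrite mulrDl mulrA.
rewrite !tmul_cons tmul_nil.
have -> : (fun u => tmul x y (a :: u)) =
          (fun u => x [::] * y (a :: u) + tmul (fun u => x (a :: u)) y u).
  by apply/funext => u; rewrite tmul_cons.
by rewrite tmul_combl IH mulrDr mulrA addrA.
Qed.

Lemma tinv_recS x n w :
  (size w <= n)%N -> tinv_rec n.+1 x w = tinv_rec n x w.
Proof.
elim: n w => [|n IH] w.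
  by rewrite leqn0 size_eq0 => /eqP ->; rewrite /= big_ord0 subr0 div1r.
have unfold m v : tinv_rec m.+1 x v = ((v == [::])%:R
    - \sum_(k < size v) tinv_rec m x (take k v) * x (drop k v)) / x [::] by [].
move=> hw; rewrite (unfold n.+1) (unfold n); congr (_ / _); congr (_ - _).
apply: eq_bigr => k _; rewrite IH // size_take ltn_ord -ltnS.
exact: leq_trans (ltn_ord k) hw.
Qed.

Lemma tinv_recE x n w : (size w <= n)%N -> tinv_rec n x w = tinv x w.
Proof.
rewrite /tinv; elim: n => [|n IH]; first by rewrite leqn0 => /eqP ->.
by rewrite leq_eqVlt => /orP[/eqP <- //|h]; rewrite tinv_recS // IH.
Qed.

Lemma tmulVl x : x [::] != 0 -> tmul (tinv x) x = @tone R d.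
Proof.
move=> hx; apply/funext => w; rewrite /tmul big_ord_recr /= take_size drop_size.
case: w => [|a w]; first by rewrite big_ord0 add0r mulVf.
rewrite /tinv /= mulfVK // (eq_bigr (fun k : 'I_(size w).+1 =>
   tinv_rec (size w) x (take k (a :: w)) * x (drop k (a :: w)))).
  by rewrite addrC subrK.
move=> k _; rewrite (@tinv_recE x (size w)) // size_takel; [by rewrite -ltnS | exact: ltnW].
Qed.

Lemma tmulVr x : x [::] != 0 -> tmul x (tinv x) = @tone R d.
Proof.
move=> hx; have hVx : tinv x [::] != 0 by rewrite /tinv /= invr_eq0.
have tinvK : tinv (tinv x) = x.
  by rewrite -[LHS]tmul1r -(tmulVl hx) -tmulA (tmulVl hVx) tmul1l.
by rewrite -{1}tinvK tmulVl.
Qed.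

Lemma tinv_unique x y : x [::] != 0 -> tmul y x = @tone R d -> y = tinv x.
Proof. by move=> hx h; rewrite -[y]tmul1r -(tmulVr hx) -tmulA h tmul1l. Qed.

Lemma tmul_idem_tone x : x [::] != 0 -> tmul x x = x -> x = @tone R d.
Proof. by move=> hx h; rewrite -[x]tmul1l -(tmulVl hx) tmulA h. Qed.

End TensorAlgebra.

Section LittleO.
Variables (R : realType) (T s : R).
Implicit Types (f g : R -> R) (l : R).

Lemma littleo0 : littleo_at T s (fun _ => 0).
Proof. by move=> e e0; exists 1 => // t _ _; rewrite normr0 mulr_ge0 // ltW. Qed.

Lemma eq_littleo f g :
  (forall t, inI T t -> f t = g t) -> littleo_at T s f -> littleo_at T s g.
Proof.
move=> fg lof e e0; have [del del0 H] := lof e e0.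
by exists del => // t It ht; rewrite -fg //; apply: H.
Qed.

Lemma littleoD f g :
  littleo_at T s f -> littleo_at T s g -> littleo_at T s (fun t => f t + g t).
Proof.
move=> lof log e e0; have e2 : 0 < e / 2 by rewrite divr_gt0.
have [d1 d10 H1] := lof _ e2; have [d2 d20 H2] := log _ e2.
exists (Num.min d1 d2) => [|t It /andP[t0]]; first by rewrite lt_min d10 d20.
rewrite lt_min => /andP[t1 t2]; apply: (le_trans (ler_normD _ _)).
by rewrite [e in _ <= e * _](splitr e) mulrDl lerD // ?H1 ?H2 ?t0 ?t1 ?t2.
Qed.

Lemma littleoMl c f : littleo_at T s f -> littleo_at T s (fun t => c * f t).
Proof.
move=> lof e e0; have c1 : 0 < `|c| + 1 by rewrite ltr_wpDl.
have [del del0 H] := lof _ (divr_gt0 e0 c1); exists del => // t It ht.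
rewrite normrM; apply: (le_trans (ler_wpM2l (normr_ge0 c) (H t It ht))).
rewrite mulrA ler_wpM2r // mulrCA ger_pMr // ler_pdivrMr // mul1r lerDl //.
Qed.

Lemma littleo_sum (I : Type) (r : seq I) (P : pred I) (F : I -> R -> R) :
  (forall i, littleo_at T s (F i)) ->
  littleo_at T s (fun t => \sum_(i <- r | P i) F i t).
Proof.
move=> loF; elim: r => [|i r IH].
  by apply: eq_littleo littleo0 => t _; rewrite big_nil.
case Pi: (P i); [apply: eq_littleo (littleoD (loF i) IH) | apply: eq_littleo IH];
  by move=> t _; rewrite big_cons Pi.
Qed.

Lemma littleo_mul_bigO f g (Cf Cg df dg : R) :
  0 <= Cf -> 0 <= Cg -> 0 < df -> 0 < dg ->
  (forall t, inI T t -> `|t - s| < df -> `|f t| <= Cf * `|t - s|) ->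
  (forall t, inI T t -> `|t - s| < dg -> `|g t| <= Cg * `|t - s|) ->
  littleo_at T s (fun t => f t * g t).
Proof.
move=> Cf0 Cg0 df0 dg0 Of Og e e0; have C1 : 0 < Cf * Cg + 1 by rewrite ltr_wpDl // mulr_ge0.
exists (Num.min (Num.min df dg) (e / (Cf * Cg + 1))); first by rewrite !lt_min df0 dg0 divr_gt0.
move=> t It /andP[t0]; rewrite !lt_min => /andP[/andP[tf tg] te].
rewrite normrM; apply: (le_trans (ler_pM (normr_ge0 _) (normr_ge0 _) (Of t It tf) (Og t It tg))).
rewrite mulrACA mulrA ler_wpM2r //; rewrite ltr_pdivlMr // in te.
by apply: le_trans (ltW te); rewrite mulrC mulrDr mulr1 lerDl.
Qed.

Definition taylor1 f l := littleo_at T s (fun t => f t - f s - l * (t - s)).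

Lemma taylor1_deriv f l : taylor1 f l <-> is_deriv_within T f s l.
Proof.
split=> H e e0.
  have [del del0 Hd] := H _ (divr_gt0 e0 (ltr0Sn R 1)); exists del => // h h0 hd Ih.
  have := Hd (s + h) Ih; rewrite addrC addKr normr_gt0 h0 hd => /(_ isT) hle.
  have -> : (f (s + h) - f s) / h - l = (f (s + h) - f s - l * h) / h.
    by rewrite [RHS]mulrBl mulfK.
  rewrite normrM normfV ltr_pdivrMr ?normr_gt0 //; apply: le_lt_trans hle _.
  by rewrite ltr_pM2r ?normr_gt0 // ltr_pdivrMr // ltr_pMr // ltr1n.
have [del del0 Hd] := H e e0; exists del => // t It /andP[t0 td].
have ts0 : t - s != 0 by rewrite -normr_gt0.
have := Hd (t - s) ts0 td; rewrite addrC subrK => /(_ It) /ltW h.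
by rewrite -[f t - f s](mulfVK ts0) -mulrBl normrM ler_wpM2r.
Qed.

Lemma eq_taylor1 f g l :
  inI T s -> (forall t, inI T t -> f t = g t) -> taylor1 f l -> taylor1 g l.
Proof. by move=> Is fg; apply: eq_littleo => t It; rewrite !fg. Qed.

Lemma taylor1_cst c : taylor1 (fun _ => c) 0.
Proof. by apply: eq_littleo littleo0 => t _; rewrite subrr mul0r subr0. Qed.

Lemma taylor1D f g a b :
  taylor1 f a -> taylor1 g b -> taylor1 (fun t => f t + g t) (a + b).
Proof. by move=> Tf Tg; apply: eq_littleo (littleoD Tf Tg) => t _; ring. Qed.

Lemma taylor1_bigO f l : taylor1 f l -> exists2 del, 0 < del &
  forall t, inI T t -> `|t - s| < del -> `|f t - f s| <= (`|l| + 1) * `|t - s|.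
Proof.
move=> Tf; have [del del0 H] := Tf 1 ltr01; exists del => // t It td.
have [->|ts] := eqVneq t s; first by rewrite !subrr normr0 mulr0.
have := H t It; rewrite normr_gt0 subr_eq0 ts td mul1r => /(_ isT) h.
rewrite -[f t - f s](subrK (l * (t - s))) mulrDl mul1r addrC.
by apply: le_trans (ler_normD _ _) _; rewrite normrM lerD.
Qed.

Lemma taylor1M f g a b :
  taylor1 f a -> taylor1 g b -> taylor1 (fun t => f t * g t) (a * g s + f s * b).
Proof.
move=> Tf Tg; have [df df0 Of] := taylor1_bigO Tf; have [dg dg0 Og] := taylor1_bigO Tg.
have := littleo_mul_bigO (addr_ge0 (normr_ge0 a) ler01) (addr_ge0 (normr_ge0 b) ler01)
  df0 dg0 Of Og.
move/(littleoD (littleoD (littleoMl (g s) Tf) (littleoMl (f s) Tg))).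
by apply: eq_littleo => t _; ring.
Qed.

Lemma taylor1_sum (I : Type) (r : seq I) (P : pred I) (F : I -> R -> R) (l : I -> R) :
  (forall i, taylor1 (F i) (l i)) ->
  taylor1 (fun t => \sum_(i <- r | P i) F i t) (\sum_(i <- r | P i) l i).
Proof.
move=> TF; elim: r => [|i r IH].
  by apply: eq_littleo (taylor1_cst 0) => t _; rewrite !big_nil.
case Pi: (P i); [apply: eq_littleo (taylor1D (TF i) IH) | apply: eq_littleo IH];
  by move=> t _; rewrite !big_cons Pi.
Qed.

Lemma taylor1_littleo f g l :
  taylor1 f l -> taylor1 g l -> f s = g s -> littleo_at T s (fun t => f t - g t).
Proof.
move=> Tf Tg fg; apply: eq_littleo (littleoD Tf (littleoMl (-1) Tg)) => t _.
by rewrite fg; ring.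
Qed.

Lemma littleo_taylor1 f : littleo_at T s f -> f s = 0 -> taylor1 f 0.
Proof. by move=> lof fs; apply: eq_littleo lof => t _; rewrite fs mul0r !subr0. Qed.

End LittleO.

Section TensorCalculus.
Variables (R : realType) (d : nat) (T s : R).
Implicit Types (A B : R -> series R d) (a b : series R d).

Lemma taylor1_tmul A B a b w :
  (forall v, taylor1 T s (fun t => A t v) (a v)) ->
  (forall v, taylor1 T s (fun t => B t v) (b v)) ->
  taylor1 T s (fun t => tmul (A t) (B t) w) (tmul a (B s) w + tmul (A s) b w).
Proof.
by move=> TA TB; rewrite /tmul -big_split; apply: taylor1_sum => k; apply: taylor1M.
Qed.

Lemma littleo_tpair A :
  (forall v, littleo_at T s (fun t => A t v)) ->
  forall p, littleo_at T s (fun t => tpair (A t) p).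
Proof. by move=> loA p; apply: littleo_sum => cw; apply: littleoMl. Qed.

Lemma littleo_tpair_sub A B a :
  (forall v, taylor1 T s (fun t => A t v) (a v)) ->
  (forall v, taylor1 T s (fun t => B t v) (a v)) -> A s = B s ->
  forall p, littleo_at T s (fun t => tpair (tsub (A t) (B t)) p).
Proof. by move=> TA TB AB; apply: littleo_tpair => v; apply: taylor1_littleo; rewrite ?AB. Qed.

End TensorCalculus.

Section Sgrm.
Variables (R : realType) (d : nat) (T : R) (X : R -> R -> series R d).
Hypothesis sX : sgrm T X.

Lemma pair_shuffle_nil (x : series R d) w : pair_shuffle x w [::] = x w.
Proof.
have shrev_nil (a : word d) : shrev a [::] = [:: a] by case: a.
by rewrite /pair_shuffle /shuffle /= shrev_nil /= big_cons big_nil addr0 revK.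
Qed.

Lemma sgrm_nil s t : inI T s -> inI T t -> X s t [::] = 1.
Proof.
case: sX => [[s0 [t0 [Is0 It0 X0]]] [Xsh [Xchen _]]] Is It.
have X0nil : X s0 t0 [::] != 0.
  apply: contra_notN X0 => /eqP X0nil; apply/funext => w.
  by rewrite -[LHS]pair_shuffle_nil Xsh // X0nil mulr0.
have Xnil2 : X s t [::] * X s t [::] = X s t [::].
  by rewrite -Xsh // pair_shuffle_nil.
have : X s0 t0 [::] = X s0 s [::] * (X s t [::] * X t t0 [::]).
  by rewrite -!tmul_nil !Xchen.
have [->|] := eqVneq (X s t [::]) 0; first by rewrite mul0r mulr0 => /eqP; rewrite (negbTE X0nil).
by move=> nz _; apply: (mulIf nz); rewrite Xnil2 mul1r.
Qed.

Lemma sgrm_diag s : inI T s -> X s s = @tone R d.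
Proof.
move=> Is; apply: tmul_idem_tone; first by rewrite sgrm_nil ?oner_neq0.
by case: sX => _ [_ [Xchen _]]; apply: Xchen.
Qed.

Lemma sgrm_diag_deriv : exists DX, diag_deriv T X DX.
Proof.
case: sX => _ [_ [_ Xsmooth]].
have : forall p : R * word d, exists l, inI T p.1 ->
    is_deriv_within T (fun t => X p.1 t p.2) p.1 l.
  move=> [s w] /=; have [Is|] := pselect (inI T s); last by exists 0.
  have [F [F0 FD]] := Xsmooth s w Is; exists (F 1%N s) => _ e e0.
  have [del del0 H] := FD 0%N s Is e e0.
  by exists del => // h h0 hd Ih; rewrite -!F0 //; apply: H.
case/choice => DX HDX.
by exists (fun s w => DX (s, w)) => s w Is; apply: (HDX (s, w)).
Qed.

End Sgrm.

Section SgrmPair.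
Variables (R : realType) (d : nat) (T : R) (X Y : R -> R -> series R d).
Hypotheses (sX : sgrm T X) (sY : sgrm T Y).

Lemma taylor1_tmul_sgrm DX DY s w :
  diag_deriv T X DX -> diag_deriv T Y DY -> inI T s ->
  taylor1 T s (fun t => tmul (X s t) (Y s t) w) (DX s w + DY s w).
Proof.
move=> DXX DYY Is; have := @taylor1_tmul _ _ T s (X s) (Y s) (DX s) (DY s) w.
rewrite (sgrm_diag sX) // (sgrm_diag sY) // tmul1r tmul1l; apply=> v.
  exact/taylor1_deriv/DXX.
exact/taylor1_deriv/DYY.
Qed.

End SgrmPair.

Section CanonicalSum.
Variables (R : realType) (d : nat) (T : R).

Definition chen (Z : R -> R -> series R d) : Prop :=
  forall s u t, inI T s -> inI T u -> inI T t -> Z s t = tmul (Z s u) (Z u t).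

Definition approx_tmul (X Y Z : R -> R -> series R d) : Prop :=
  forall s, inI T s -> exists Rm : R -> series R d,
    (forall t, inI T t -> Z s t = tadd (tmul (X s t) (Y s t)) (Rm t)) /\
    (forall p : tpoly R d, littleo_at T s (fun t => tpair (Rm t) p)).

Variables X Y : R -> R -> series R d.
Hypotheses (sX : sgrm T X) (sY : sgrm T Y).

Lemma tmul_commutator_littleo s p : inI T s ->
  littleo_at T s (fun t => tpair (tsub (tmul (X s t) (Y s t)) (tmul (Y s t) (X s t))) p).
Proof.
move=> Is; have [DX DXX] := sgrm_diag_deriv sX; have [DY DYY] := sgrm_diag_deriv sY.
apply: (littleo_tpair_sub (a := tadd (DX s) (DY s))) => [v|v|].
- exact: taylor1_tmul_sgrm.
- by rewrite /tadd addrC; apply: taylor1_tmul_sgrm.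
- by rewrite (sgrm_diag sX) // (sgrm_diag sY) // tmul1l.
Qed.

Lemma tmul_sub_tadd_littleo s p : inI T s ->
  littleo_at T s
    (fun t => tpair (tsub (tmul (X s t) (Y s t)) (tsub (tadd (X s t) (Y s t)) (@tone R d))) p).
Proof.
move=> Is; have [DX DXX] := sgrm_diag_deriv sX; have [DY DYY] := sgrm_diag_deriv sY.
apply: (littleo_tpair_sub (a := tadd (DX s) (DY s))) => [v|v|].
- exact: taylor1_tmul_sgrm.
- rewrite /tadd -[DX s v + DY s v]addr0; apply: taylor1D (taylor1_cst _ _ _).
  by apply: taylor1D; apply/taylor1_deriv; [apply: DXX | apply: DYY].
- rewrite (sgrm_diag sX) // (sgrm_diag sY) // tmul1l.
  by apply/funext => w; rewrite /tsub /tadd addrK.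
Qed.

Variable Z : R -> R -> series R d.
Hypothesis Zgrouplike : forall s t, inI T s -> inI T t -> grouplike (Z s t).

Lemma canonical_sum_path_unit W :
  (forall s t, inI T s -> inI T t -> Z s t = tmul (tinv (W s)) (W t)) ->
  forall u, inI T u -> W u [::] != 0.
Proof.
move=> ZW u Iu; apply/eqP => Wu0; have [+ _] := Zgrouplike Iu Iu.
by rewrite ZW // tmul_nil /tinv /= Wu0 mulr0 => /eqP; rewrite eq_sym oner_eq0.
Qed.

Lemma is_boxplus_chen : is_boxplus T X Y Z -> chen Z.
Proof.
case=> W [_ ZW] s u t Is Iu It; rewrite !ZW //.
by rewrite tmulA -(tmulA (W u)) tmulVr ?(canonical_sum_path_unit ZW) // tmul1l.
Qed.

Lemma is_boxplus_approx_tmul : is_boxplus T X Y Z -> approx_tmul X Y Z.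
Proof.
case=> W [[_ [DX [DY [DXX DYY DW]]]] ZW] s Is.
have Ws := canonical_sum_path_unit ZW Is.
exists (fun t => tsub (Z s t) (tmul (X s t) (Y s t))); split=> [t It|].
  by rewrite tsubKC.
apply: (littleo_tpair_sub (a := tadd (DX s) (DY s))) => [v|v|].
- apply: (@eq_taylor1 _ _ _ (fun t => tmul (tinv (W s)) (W t) v)) => // [t It|].
    by rewrite ZW.
  have := taylor1_tmul v (fun v => taylor1_cst T s (tinv (W s) v))
    (fun v => iffRL (taylor1_deriv _ _ _ _) (DW s v Is)).
  by rewrite tmul0l add0r -tmulA tmulVl // tmul1l.
- exact: taylor1_tmul_sgrm.
- by rewrite ZW // tmulVl // (sgrm_diag sX) // (sgrm_diag sY) // tmul1l.
Qed.

Lemma chen_diag : chen Z -> forall s, inI T s -> Z s s = @tone R d.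
Proof.
move=> Zchen s Is; apply: tmul_idem_tone; last by rewrite -Zchen.
by have [-> _] := Zgrouplike Is Is; rewrite oner_neq0.
Qed.

Lemma approx_tmul_taylor1 DX DY t v :
  diag_deriv T X DX -> diag_deriv T Y DY -> chen Z -> approx_tmul X Y Z -> inI T t ->
  taylor1 T t (fun u => Z t u v) (DX t v + DY t v).
Proof.
move=> DXX DYY Zchen Zapprox It; have [Rm [ZRm loRm]] := Zapprox t It.
have Rmt : Rm t v = 0.
  have := congr1 (fun x => x v) (ZRm t It).
  rewrite chen_diag // (sgrm_diag sX) // (sgrm_diag sY) // tmul1l /tadd.
  by move/(canLR (addKr _)); rewrite addNr.
apply: (@eq_taylor1 _ _ _ (fun u => tmul (X t u) (Y t u) v + Rm u v)) => // [u Iu|].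
  by rewrite ZRm.
rewrite -[_ + DY t v]addr0; apply: taylor1D; first exact: taylor1_tmul_sgrm.
apply: littleo_taylor1 => //.
by apply: eq_littleo (loRm [:: (1, v)]) => u _; rewrite /tpair big_seq1 mul1r.
Qed.

Lemma chen_approx_tmul_is_boxplus :
  0 < T -> chen Z -> approx_tmul X Y Z -> is_boxplus T X Y Z.
Proof.
move=> T0 Zchen Zapprox; have I0 : inI T 0 by rewrite /inI lexx ltW.
have [DX DXX] := sgrm_diag_deriv sX; have [DY DYY] := sgrm_diag_deriv sY.
exists (Z 0); split; last first.
  move=> s t Is It; rewrite (Zchen s 0 t) //; congr tmul.
  apply: tinv_unique; first by have [-> _] := Zgrouplike I0 Is; rewrite oner_neq0.
  by rewrite -Zchen // chen_diag.
split; first exact: chen_diag.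
exists DX, DY; split=> // t w It; apply/taylor1_deriv.
apply: (@eq_taylor1 _ _ _ (fun u => tmul (Z 0 t) (Z t u) w)) => // [u Iu|].
  by rewrite -Zchen.
have := @taylor1_tmul _ _ T t (fun _ => Z 0 t) (Z t) (fun _ => 0) (tadd (DX t) (DY t)) w
  (fun v => taylor1_cst T t _).
by rewrite tmul0l add0r; apply=> v; apply: approx_tmul_taylor1.
Qed.

End CanonicalSum.

Unset Implicit Arguments. Set Strict Implicit.

Theorem proposition2p16 (R : realType) (d : nat) (T : R)
  (X Y : R -> R -> series R d) :
  0 < T -> (0 < d)%N -> sgrm T X -> sgrm T Y ->
  (forall Z : R -> R -> series R d,
     (forall s t, inI T s -> inI T t -> grouplike (Z s t)) ->
     (is_boxplus T X Y Z <->
      ((forall s u t, inI T s -> inI T u -> inI T t ->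
          Z s t = tmul (Z s u) (Z u t)) /\
       (forall s, inI T s ->
          exists Rm : R -> series R d,
            (forall t, inI T t -> Z s t = tadd (tmul (X s t) (Y s t)) (Rm t)) /\
            (forall p : tpoly R d, littleo_at T s (fun t => tpair (Rm t) p)))))) /\
  (forall s, inI T s ->
     exists r r' : R -> series R d,
       (forall t, inI T t ->
          tmul (X s t) (Y s t) = tadd (tmul (Y s t) (X s t)) (r t) /\
          tmul (X s t) (Y s t) = tadd (tsub (tadd (X s t) (Y s t)) (@tone R d)) (r' t)) /\
       (forall p : tpoly R d,
          littleo_at T s (fun t => tpair (r t) p) /\
          littleo_at T s (fun t => tpair (r' t) p))).
Proof.
move=> T0 _ sX sY; split=> [Z Zgrouplike|s Is].
  split=> [Zbox|[Zchen Zapprox]].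
    by split; [exact: is_boxplus_chen Zbox | exact: is_boxplus_approx_tmul Zbox].
  exact: chen_approx_tmul_is_boxplus T0 Zchen Zapprox.
exists (fun t => tsub (tmul (X s t) (Y s t)) (tmul (Y s t) (X s t))).
exists (fun t => tsub (tmul (X s t) (Y s t)) (tsub (tadd (X s t) (Y s t)) (@tone R d))).
split=> [t _|p]; first by rewrite !tsubKC.
by split; [exact: tmul_commutator_littleo | exact: tmul_sub_tadd_littleo].
Qed.
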